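(* For every $\lambda\in\mathbb{C}$, $$\det\left(\mathbf{P}_4^{-1}\mathbf{K}-\lambda I_{2m+n}\right)=(1-\lambda)^{2m}\det\left(B^{-1}H-\lambda I_n\right).$$ Consequently the eigenvalues of $\mathbf{P}_4^{-1}\mathbf{K}$ are $1$ with algebraic multiplicity (at least) $2m$ together with the eigenvalues of $B^{-1}H$ (counted with algebraic multiplicity).
   Context: Let $m,n\ge 1$. Let $R_u\in\mathbb{R}^{m\times m}$ be invertible, $R_z\in\mathbb{R}^{m\times n}$, $L_{uu}\in\mathbb{R}^{m\times m}$ symmetric, $L_{uz}\in\mathbb{R}^{m\times n}$, $L_{zu}:=L_{uz}^T$, $L_{zz}\in\mathbb{R}^{n\times n}$ symmetric, and $B\in\mathbb{R}^{n\times n}$ invertible. Write $R_u^{-T}:=(R_u^{-1})^T$. Define $L_{yy}:=L_{uz}-L_{uu}R_u^{-1}R_z$ and the reduced Hessian $H:=L_{zz}-L_{zu}R_u^{-1}R_z-R_z^TR_u^{-T}L_{uz}+R_z^TR_u^{-T}L_{uu}R_u^{-1}R_z$. The KKT matrix is $\mathbf{K}:=\begin{bmatrix} L_{uu} & L_{uz} & R_u^T\\ L_{zu} & L_{zz} & R_z^T\\ R_u & R_z & 0\end{bmatrix}$. The preconditioner is $\mathbf{P}_4:=\mathbf{K}_1\mathbf{K}_2$ where $\mathbf{K}_1=\begin{bmatrix} L_{uu}R_u^{-1} & 0 & I_m\\ L_{zu}R_u^{-1} & I_n & R_z^TR_u^{-T}\\ I_m & 0 & 0\end{bmatrix}$ and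 $\mathbf{K}_2=\begin{bmatrix} R_u & R_z & 0\\ 0 & B & 0\\ 0 & L_{yy} & R_u^T\end{bmatrix}$. *)

From HB Require Import structures.
From mathcomp Require Import all_boot all_order all_algebra.
From mathcomp Require Import complex.
Set Implicit Arguments. Unset Strict Implicit. Unset Printing Implicit Defensive.
Import Order.TTheory GRing.Theory Num.Theory.
Local Open Scope ring_scope.

Section Block3.
Variable R : pzRingType.
Definition block3_mx {p1 p2 p3 q1 q2 q3 : nat}
  (A11 : 'M[R]_(p1, q1)) (A12 : 'M[R]_(p1, q2)) (A13 : 'M[R]_(p1, q3))
  (A21 : 'M[R]_(p2, q1)) (A22 : 'M[R]_(p2, q2)) (A23 : 'M[R]_(p2, q3))
  (A31 : 'M[R]_(p3, q1)) (A32 : 'M[R]_(p3, q2)) (A33 : 'M[R]_(p3, q3))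
  : 'M[R]_(p1 + p2 + p3, q1 + q2 + q3) :=
  block_mx (block_mx A11 A12 A21 A22) (col_mx A13 A23) (row_mx A31 A32) A33.
End Block3.

Section KKT.
Context {R : comUnitRingType} {m n : nat}.
Implicit Types (Ru Luu : 'M[R]_m) (Rz Luz : 'M[R]_(m, n)) (Lzz B : 'M[R]_n).

Definition Lyy Ru Rz Luu Luz : 'M[R]_(m, n) := Luz - Luu *m invmx Ru *m Rz.
Definition redH Ru Rz Luu Luz Lzz : 'M[R]_n :=
  Lzz - Luz^T *m invmx Ru *m Rz - Rz^T *m (invmx Ru)^T *m Luz
      + Rz^T *m (invmx Ru)^T *m Luu *m invmx Ru *m Rz.

Definition KKT Ru Rz Luu Luz Lzz : 'M[R]_(m + n + m) :=
  block3_mx Luu   Luz Ru^T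
            Luz^T Lzz Rz^T
            Ru    Rz  0.
Definition K1 Ru Rz Luu Luz : 'M[R]_(m + n + m) :=
  block3_mx (Luu *m invmx Ru)   0     1%:M
            (Luz^T *m invmx Ru) 1%:M  (Rz^T *m (invmx Ru)^T)
            1%:M                0     0.
Definition K2 Ru Rz Luu Luz B : 'M[R]_(m + n + m) :=
  block3_mx Ru Rz                  0
            0  B                   0
            0  (Lyy Ru Rz Luu Luz) Ru^T.
Definition P4 Ru Rz Luu Luz B : 'M[R]_(m + n + m) :=
  K1 Ru Rz Luu Luz *m K2 Ru Rz Luu Luz B.
End KKT.

From HB Require Import structures.
From mathcomp Require Import all_boot all_order all_algebra.
From mathcomp Require Import complex.
From mathcomp Require Import ring.
Import Order.TTheory GRing.Theory Num.Theory.
Local Open Scope ring_scope.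

(* Write K2(G) for the second factor of P4 with its middle diagonal block B
   replaced by G; it is block lower triangular with diagonal blocks
   Ru, G, Ru^T.  The key observation is that the KKT matrix factors through
   the same first factor as the preconditioner, with the reduced Hessian in
   the middle: K = K1 K2(H), while P4 = K1 K2(B).  Since K1 is invertible
   (its inverse is written down explicitly), P4^{-1} K = K2(B)^{-1} K2(H).
   The pencil X K2(B) - K2(H) is again block triangular with diagonal blocks
   (X-1) Ru, X B - H, (X-1) Ru^T, so its determinant is
   (X-1)^{2m} det(Ru)^2 det(X B - H); dividing by det K2(B) = det(Ru)^2 det B
   yields char_poly (P4^{-1} K) = (X-1)^{2m} char_poly (B^{-1} H).
   Evaluating this polynomial identity at any complex lambda gives the
   determinant formula of the theorem. *)

Lemma invmxM (R : comUnitRingType) p (A B : 'M[R]_p) :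
  A \in unitmx -> B \in unitmx -> invmx (A *m B) = invmx B *m invmx A.
Proof.
move=> uA uB; have uAB : A *m B \in unitmx by rewrite unitmx_mul uA.
apply: (can_inj (mulKmx uAB)).
by rewrite mulmxV // -mulmxA (mulmxA B) mulmxV // mul1mx mulmxV.
Qed.

Lemma char_poly_pencil (F : fieldType) p (U V : 'M[F]_p) : U \in unitmx ->
  (\det U)%:P * char_poly (invmx U *m V) =
  \det ('X *: map_mx polyC U - map_mx polyC V).
Proof.
move=> uU; rewrite /char_poly /char_poly_mx -det_map_mx -det_mulmx.
by rewrite mulmxBr mul_mx_scalar -map_mxM mulKVmx.
Qed.

Lemma det_sub_scalar (K : comNzRingType) p (A : 'M[K]_p) (x : K) :
  \det (A - x%:M) = (-1) ^+ p * (char_poly A).[x].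
Proof.
have -> : (char_poly A).[x] = \det (x%:M - A).
  rewrite /char_poly -[LHS]/(horner_eval x (\det (char_poly_mx A))).
  rewrite -det_map_mx; congr (\det _); apply/matrixP => i j.
  by rewrite !mxE rmorphB rmorphMn /= !horner_evalE hornerX hornerC.
by rewrite -[A - _]opprB -scaleN1r detZ.
Qed.

Lemma det_sub_scalar_factor {K L : comNzRingType} (f : {rmorphism K -> L})
    p q k (A : 'M[K]_p) (S : 'M[K]_q) (x : L) :
  p = (k + q)%N -> char_poly A = ('X - 1) ^+ k * char_poly S ->
  \det (map_mx f A - x%:M) = (1 - x) ^+ k * \det (map_mx f S - x%:M).
Proof.
move=> pE charA; rewrite !det_sub_scalar -!map_char_poly charA.
have -> : (-1) ^+ p = (-1) ^+ (k + q) :> L by rewrite pE.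
rewrite rmorphM rmorphXn /= rmorphB /= map_polyX map_polyC /=.
rewrite hornerM horner_exp hornerD hornerN hornerX hornerC rmorph1.
by rewrite exprD -[1 - x]opprB (exprNn (x - 1)); ring.
Qed.

Section PreconditionedKKT.
Variables (F : fieldType) (m n : nat).
Variables (Ru : 'M[F]_m) (Rz Luz : 'M[F]_(m, n)) (Luu : 'M[F]_m).

Let K2_ (G : 'M[F]_n) := K2 Ru Rz Luu Luz G.

(* An explicit inverse of the first factor K1 (a block permutation of a
   block unitriangular matrix); it shows that K1 is always invertible. *)
Definition K1_inv : 'M[F]_(m + n + m) :=
  block3_mx 0 0 1%:M
    (- (Rz^T *m (invmx Ru)^T)) 1%:M
      (Rz^T *m (invmx Ru)^T *m (Luu *m invmx Ru) - Luz^T *m invmx Ru)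
    1%:M 0 (- (Luu *m invmx Ru)).

Lemma K1_unit : K1 Ru Rz Luu Luz \in unitmx.
Proof.
have [] := @mulmx1_unit _ _ (K1 Ru Rz Luu Luz) K1_inv => //.
rewrite /K1 /K1_inv /block3_mx.
rewrite !(mulmx_block, mul_row_col, mul_col_row, mul_row_block, mul_block_col,
          mul_mx_row, mul_col_mx).
rewrite !(mulmx0, mul0mx, mul1mx, mulmx1, addr0, add0r, add_col_mx, add_row_mx,
          add_block_mx).
rewrite !scalar_mx_block addNr subrr mulmxN row_mx0.
by rewrite addrCA subrr addr0 subrr col_mx0 -block_mxEv.
Qed.

Lemma KKT_factor (Lzz : 'M[F]_n) : Ru \in unitmx ->
  KKT Ru Rz Luu Luz Lzz = K1 Ru Rz Luu Luz *m K2_ (redH Ru Rz Luu Luz Lzz).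
Proof.
move=> uRu; rewrite /K2_ /K1 /K2 /KKT /block3_mx.
rewrite !(mulmx_block, mul_row_col, mul_col_row, mul_row_block, mul_block_col,
          mul_mx_row, mul_col_mx).
rewrite !(mulmx0, mul0mx, mul1mx, mulmx1, addr0, add0r, add_col_mx, add_row_mx,
          add_block_mx).
rewrite trmx_inv !mulmxKV ?unitmx_tr //.
congr block_mx; rewrite block_mxEv; congr col_mx; congr row_mx.
  by rewrite /Lyy addrC subrK.
rewrite /redH /Lyy mulmxBr !mulmxA -trmx_inv.
by rewrite !addrA (addrC _ Lzz) addrK addrAC addrK subrK.
Qed.

(* K2(G) is block triangular with diagonal blocks Ru, G, Ru^T. *)
Lemma det_K2 (G : 'M[F]_n) : \det (K2_ G) = \det Ru ^+ 2 * \det G.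
Proof.
by rewrite /K2_ /K2 /block3_mx col_mx0 det_lblock det_ublock det_tr mulrAC.
Qed.

Lemma K2_unit (G : 'M[F]_n) :
  Ru \in unitmx -> G \in unitmx -> K2_ G \in unitmx.
Proof. by rewrite !unitmxE det_K2 unitrM unitrX_pos // => -> ->. Qed.

(* The pencil X K2(B) - K2(G) is block triangular with diagonal blocks
   (X-1) Ru, X B - G and (X-1) Ru^T. *)
Lemma det_K2_pencil (B G : 'M[F]_n) :
  \det ('X *: map_mx polyC (K2_ B) - map_mx polyC (K2_ G))
  = ('X - 1) ^+ (2 * m) * (\det Ru ^+ 2)%:P
    * \det ('X *: map_mx polyC B - map_mx polyC G).
Proof.
rewrite /K2_ /K2 /block3_mx.
rewrite !(map_block_mx, map_col_mx, map_row_mx, map_mx0, scale_block_mx,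
          scale_col_mx, scale_row_mx, scaler0, opp_block_mx, opp_col_mx,
          opp_row_mx, oppr0, add_block_mx, add_col_mx, add_row_mx, addr0,
          col_mx0).
rewrite det_lblock det_ublock.
have pencil_same p (A : 'M[{poly F}]_p) : 'X *: A - A = ('X - 1) *: A.
  by rewrite scalerBl scale1r.
rewrite !pencil_same !detZ -map_trmx det_tr !det_map_mx rmorphXn.
by rewrite mul2n -addnn exprD; ring.
Qed.

Lemma char_poly_K2 (B G : 'M[F]_n) : Ru \in unitmx -> B \in unitmx ->
  char_poly (invmx (K2_ B) *m K2_ G)
  = ('X - 1) ^+ (2 * m) * char_poly (invmx B *m G).
Proof.
move=> uRu uB; have uK2 := K2_unit B uRu uB.
apply: (@mulfI _ (\det (K2_ B))%:P); first by rewrite polyC_eq0 -unitfE -unitmxE.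
rewrite char_poly_pencil // det_K2_pencil -char_poly_pencil // det_K2.
by rewrite polyCM; ring.
Qed.

Lemma preconditioned_KKT (Lzz B : 'M[F]_n) : Ru \in unitmx -> B \in unitmx ->
  invmx (P4 Ru Rz Luu Luz B) *m KKT Ru Rz Luu Luz Lzz
  = invmx (K2_ B) *m K2_ (redH Ru Rz Luu Luz Lzz).
Proof.
move=> uRu uB; have uK2 := K2_unit B uRu uB.
by rewrite /P4 invmxM ?K1_unit // KKT_factor // -mulmxA mulKmx ?K1_unit.
Qed.

End PreconditionedKKT.

Theorem mainTheorem6 (R : rcfType) (m n : nat) (Hm : (0 < m)%N) (Hn : (0 < n)%N)
  (Ru : 'M[R]_m) (Rz : 'M[R]_(m, n)) (Luu : 'M[R]_m) (Luz : 'M[R]_(m, n))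
  (Lzz : 'M[R]_n) (B : 'M[R]_n) :
  Ru \in unitmx -> Luu^T = Luu -> Lzz^T = Lzz -> B \in unitmx ->
  let M := invmx (P4 Ru Rz Luu Luz B) *m KKT Ru Rz Luu Luz Lzz in
  let S := invmx B *m redH Ru Rz Luu Luz Lzz in
  (forall lambda : R[i],
     \det (map_mx (real_complex R) M - lambda%:M)
     = (1 - lambda) ^+ (2 * m) * \det (map_mx (real_complex R) S - lambda%:M))
  /\ char_poly M = ('X - 1) ^+ (2 * m) * char_poly S.
Proof.
move=> uRu _ _ uB M S.
have charM : char_poly M = ('X - 1) ^+ (2 * m) * char_poly S.
  by rewrite /M preconditioned_KKT // char_poly_K2.
split=> // lambda.
have dimM : (m + n + m)%N = (2 * m + n)%N by rewrite mul2n -addnn addnAC.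
by rewrite (det_sub_scalar_factor (real_complex R) _ _ _ M S lambda dimM charM).
Qed.
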